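(* Let $\mathcal{P}=(V_1,\dots,V_k)$ be an $\varepsilon$-regular $k$-partition of an $n$-vertex graph $G$, and let $d_{ij}:=\frac{w_G(V_i,V_j)}{|V_i||V_j|}$. For each $F\subseteq\binom{[k]}{2}$ and each $ab\in F$, all but at most $2k\sqrt{\varepsilon}\,|V_a||V_b|$ pairs $(x_a,x_b)\in V_a\times V_b$ satisfy $$\sum_g\hom_g(F,G)=\Big(\prod_{i\in[k]\setminus\{a,b\}}|V_i|\Big)\Big(w_G(x_a,x_b)\prod_{ij\in F\setminus\{ab\}}d_{ij}\ \pm\ \sqrt{\varepsilon}\,|F|\Big),$$ where the sum is over all $\mathcal{P}$-maps $g\colon[k]\to V(G)$ with $g(a)=x_a$ and $g(b)=x_b$, and ''$\pm c$'' means that the two sides differ by at most $\big(\prod_{i\ne a,b}|V_i|\big)c$.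
   Context: For a graph $G$, $w_G(u,v)=1$ if $uv\in E(G)$ and $0$ otherwise; $w_G(U,V)=\sum_{u\in U}\sum_{v\in V}w_G(u,v)$. A bipartite graph $(V_1,V_2,E)$ with density $d=w(V_1,V_2)/(|V_1||V_2|)$ is $\varepsilon$-homogeneous if for all $W_1\subseteq V_1$, $W_2\subseteq V_2$: $|w(W_1,W_2)-d|W_1||W_2||\le\varepsilon|V_1||V_2|$. An $\varepsilon$-regular $k$-partition of an $n$-vertex graph $G$ is a partition $V_1,\dots,V_k$ of $V(G)$ with $|V_i|\in\{\lfloor n/k\rfloor,\lceil n/k\rceil\}$ such that for all $i\ne j$ the bipartite graph between $V_i,V_j$ formed by edges of $G$ is $\varepsilon$-homogeneous. A graph $F$ on vertex set $[k]$ is identified with its edge set $F\subseteq\binom{[k]}{2}$. A $\mathcal{P}$-map is a function $g\colon[k]\to V(G)$ with $g(i)\in V_i$ for all $i$, and $\hom_g(F,G)=\prod_{ij\in F}w_G(g(i),g(j))$. *)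

From HB Require Import structures.
From mathcomp Require Import all_boot all_order all_algebra.
Set Implicit Arguments. Unset Strict Implicit. Unset Printing Implicit Defensive.
Import Order.TTheory GRing.Theory Num.Theory.
Local Open Scope ring_scope.

Definition simple_graph (V : finType) (e : rel V) : Prop :=
  (forall x y, e x y = e y x) /\ (forall x, ~~ e x x).

Definition wG (R : ringType) (V : finType) (e : rel V) (u v : V) : R :=
  if e u v then 1 else 0.

Definition wGs (R : ringType) (V : finType) (e : rel V) (U W : {set V}) : R :=
  \sum_(u in U) \sum_(v in W) wG R e u v.

Definition dens (R : fieldType) (V : finType) (e : rel V) (U W : {set V}) : R :=
  wGs R e U W / (#|U|%:R * #|W|%:R).

Definition homogeneous (R : realFieldType) (V : finType) (e : rel V)
    (eps : R) (U W : {set V}) : Prop :=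
  forall W1 W2 : {set V}, W1 \subset U -> W2 \subset W ->
    `| wGs R e W1 W2 - dens R e U W * (#|W1|%:R * #|W2|%:R) |
      <= eps * (#|U|%:R * #|W|%:R).

(* The partition is given by a class map part : V -> 'I_k; V_i = part^{-1}(i). *)
Definition cls (V : finType) (k : nat) (part : V -> 'I_k) (i : 'I_k) : {set V} :=
  [set v | part v == i].

Definition eps_regular_partition (R : realFieldType) (V : finType) (e : rel V)
    (eps : R) (k : nat) (part : V -> 'I_k) : Prop :=
  (forall i : 'I_k, #|cls part i| = (#|V| %/ k)%N \/
                    #|cls part i| = (#|V| %/ k + ((#|V| %% k) != 0%N))%N) /\
  (forall i j : 'I_k, i != j -> homogeneous e eps (cls part i) (cls part j)).

(* A graph F on [k] given as a symmetric irreflexive relation; its edges are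
   the pairs ij with i < j and F i j. *)
Definition nedges (k : nat) (F : rel 'I_k) : nat :=
  #|[set p : 'I_k * 'I_k | (p.1 < p.2)%N && F p.1 p.2]|.

Definition Pmap (V : finType) (k : nat) (part : V -> 'I_k) (g : {ffun 'I_k -> V}) : bool :=
  [forall i, part (g i) == i].

Definition homg (R : ringType) (V : finType) (e : rel V) (k : nat) (F : rel 'I_k)
    (g : {ffun 'I_k -> V}) : R :=
  \prod_(i < k) \prod_(j < k | (i < j)%N && F i j) wG R e (g i) (g j).

From HB Require Import structures.
From mathcomp Require Import all_boot all_order all_algebra.
From mathcomp Require Import ring lra zify.
Import Order.TTheory GRing.Theory Num.Theory.
Set Implicit Arguments. Unset Strict Implicit. Unset Printing Implicit Defensive.
Local Open Scope ring_scope.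

(* Fix x in V_a and y in V_b.  The P-maps through (x, y) are the families
   g with g i in V_i, g a = x and g b = y, and hom_g splits into w(x, y),
   the "inner" edges of F avoiding a and b, and the "links" from a and b to
   the other parts.  Replacing the inner edges one at a time by their
   densities costs eps per edge: once every other coordinate of g is fixed,
   the remaining factor is a product of [0, 1]-weights of the two endpoints,
   and homogeneity bounds every such weighted cut.  What is left is the
   deviation [link_error x y] of the link averages from the link densities;
   homogeneity again bounds its sum over V_a * V_b by 2 eps (#links)
   |V_a||V_b|.  Since every inner edge costs eps <= sqrt eps, a pair violating
   the bound has [link_error] above sqrt eps (1 + #links), and Markov's
   inequality leaves at most 2 sqrt eps |V_a||V_b| such pairs. *)

Section CutNorm.
Variables (R : realFieldType) (V : finType).

Lemma mulr_01 (x y : R) : 0 <= x <= 1 -> 0 <= y <= 1 -> 0 <= x * y <= 1.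
Proof. by move=> /andP[x0 x1] /andP[y0 y1]; rewrite mulr_ge0 // mulr_ile1. Qed.

Lemma if_01 (c : bool) (x : R) : 0 <= x <= 1 -> 0 <= (if c then x else 1) <= 1.
Proof. by case: c; rewrite ?lexx ?ler01. Qed.

Definition cut_bounded (h : V -> V -> R) (A B : {set V}) (M : R) :=
  forall W1 W2 : {set V}, W1 \subset A -> W2 \subset B ->
    `|\sum_(u in W1) \sum_(v in W2) h u v| <= M.

Lemma sum_weighted_le_pos_part (A : {set V}) (al c : V -> R) :
  (forall u, 0 <= al u <= 1) ->
  \sum_(u in A) al u * c u <= \sum_(u in [set u in A | 0 <= c u]) c u.
Proof.
move=> al01; rewrite big_set /= big_mkcondr /=; apply: ler_sum => u _.
have /andP[al0 al1] := al01 u; case: (lerP 0 (c u)) => [c0|/ltW c0].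
  by rewrite ler_piMl.
by rewrite mulr_ge0_le0.
Qed.

Lemma sum_weighted_le (A B : {set V}) (h : V -> V -> R) (M : R) (al be : V -> R) :
  (forall u, 0 <= al u <= 1) -> (forall v, 0 <= be v <= 1) ->
  (forall W1 W2 : {set V}, W1 \subset A -> W2 \subset B ->
     \sum_(u in W1) \sum_(v in W2) h u v <= M) ->
  \sum_(u in A) \sum_(v in B) al u * be v * h u v <= M.
Proof.
move=> al01 be01 hM; under eq_bigr do under eq_bigr do rewrite -mulrA.
under eq_bigr do rewrite -mulr_sumr.
apply: le_trans (sum_weighted_le_pos_part _ _ al01) _.
rewrite exchange_big /=; under eq_bigr do rewrite -mulr_sumr.
apply: le_trans (sum_weighted_le_pos_part _ _ be01) _.
by rewrite exchange_big /=; apply: hM; rewrite setIdE subsetIl.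
Qed.

Lemma cut_bounded_weighted (A B : {set V}) (h : V -> V -> R) (M : R) (al be : V -> R) :
  (forall u, 0 <= al u <= 1) -> (forall v, 0 <= be v <= 1) ->
  cut_bounded h A B M ->
  `|\sum_(u in A) \sum_(v in B) al u * be v * h u v| <= M.
Proof.
move=> al01 be01 hM.
have upper g : cut_bounded g A B M -> \sum_(u in A) \sum_(v in B) al u * be v * g u v <= M.
  move=> gM; apply: sum_weighted_le => // W1 W2 s1 s2.
  exact: le_trans (ler_norm _) (gM _ _ s1 s2).
have hNM : cut_bounded (fun u v => - h u v) A B M.
  by move=> W1 W2 s1 s2; under eq_bigr do rewrite sumrN; rewrite sumrN normrN; apply: hM.
rewrite ler_norml upper // andbT lerNl; apply: le_trans (upper _ hNM).
rewrite -sumrN; apply: ler_sum => u _; rewrite -sumrN; apply: ler_sum => v _.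
by rewrite mulrN.
Qed.

Lemma cut_bounded_l1 (A B : {set V}) (h : V -> V -> R) (M : R) (be : V -> R) :
  (forall v, 0 <= be v <= 1) -> cut_bounded h A B M ->
  \sum_(u in A) `|\sum_(v in B) be v * h u v| <= 2 * M.
Proof.
move=> be01 hM; set c := fun u => \sum_(v in B) be v * h u v.
have cut_c (P : pred V) : `|\sum_(u in A | P u) c u| <= M.
  rewrite -big_set /c; under eq_bigr do under eq_bigr do rewrite -[be _ * _]mul1r mulrA.
  apply: (@cut_bounded_weighted _ _ _ _ (fun=> 1)) => // [u|W1 W2 s1 s2].
    by rewrite ler01 lexx.
  by apply: hM => //; apply: subset_trans s1 _; rewrite setIdE subsetIl.
rewrite (bigID (fun u => 0 <= c u)) /= (eq_bigr c) => [|u /andP[_ /ger0_norm]] //.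
rewrite [X in _ + X](eq_bigr (fun u => - c u)) => [|u /andP[_]]; last first.
  by rewrite -ltNge => /ltW/ler0_norm.
have := cut_c (fun u => 0 <= c u); have := cut_c (fun u => ~~ (0 <= c u)).
rewrite sumrN -normrN; set Sp := \sum_(u in A | 0 <= c u) c u.
set Sn := - \sum_(u in A | _) c u.
by have := ler_norm Sp; have := ler_norm Sn; lra.
Qed.

Definition separable (Phi : V -> V -> R) :=
  exists al be : V -> R, [/\ forall u, 0 <= al u <= 1, forall v, 0 <= be v <= 1
                            & forall u v, Phi u v = al u * be v].

Lemma eq_separable (Phi Psi : V -> V -> R) :
  (forall u v, Phi u v = Psi u v) -> separable Phi -> separable Psi.
Proof.
by move=> ePhi [al [be [al01 be01 eal]]]; exists al, be; split=> // u v; rewrite -ePhi.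
Qed.

Lemma separable_mul (Phi Psi : V -> V -> R) :
  separable Phi -> separable Psi -> separable (fun u v => Phi u v * Psi u v).
Proof.
move=> [a1 [b1 [a1_01 b1_01 e1]]] [a2 [b2 [a2_01 b2_01 e2]]].
exists (fun u => a1 u * a2 u), (fun v => b1 v * b2 v).
by split=> [u|v|u v]; rewrite ?mulr_01 // e1 e2 mulrACA.
Qed.

Lemma separable_prod (I : eqType) (r : seq I) (P : pred I) (phi : I -> V -> V -> R) :
  (forall i, i \in r -> P i -> separable (phi i)) ->
  separable (fun u v => \prod_(i <- r | P i) phi i u v).
Proof.
elim: r => [_|i r IHr sep_phi].
  by exists (fun=> 1), (fun=> 1); split=> [u|v|u v]; rewrite ?big_nil ?mulr1 ?ler01 ?lexx.
have sep_r : separable (fun u v => \prod_(j <- r | P j) phi j u v).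
  by apply: IHr => j jr; apply: sep_phi; rewrite inE jr orbT.
case Pi: (P i).
  apply: eq_separable (separable_mul (sep_phi i (mem_head i r) Pi) sep_r) => u v.
  by rewrite big_cons Pi.
by apply: eq_separable sep_r => u v; rewrite big_cons Pi.
Qed.

Lemma separable_indep_r (Phi : V -> V -> R) :
  (forall u v, 0 <= Phi u v <= 1) -> (forall u v v', Phi u v = Phi u v') -> separable Phi.
Proof.
move=> Phi01 indep; exists (fun u => Phi u u), (fun=> 1).
by split=> [u|v|u v]; rewrite ?lexx ?ler01 ?mulr1 //; apply: indep.
Qed.

Lemma separable_indep_l (Phi : V -> V -> R) :
  (forall u v, 0 <= Phi u v <= 1) -> (forall u u' v, Phi u v = Phi u' v) -> separable Phi.
Proof.
move=> Phi01 indep; exists (fun=> 1), (fun v => Phi v v).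
by split=> [u|v|u v]; rewrite ?lexx ?ler01 ?mul1r //; apply: indep.
Qed.

Lemma cut_bounded_separable (A B : {set V}) (h Phi : V -> V -> R) (M : R) :
  cut_bounded h A B M -> separable Phi ->
  `|\sum_(u in A) \sum_(v in B) Phi u v * h u v| <= M.
Proof.
move=> hM [al [be [al01 be01 ePhi]]].
under eq_bigr do under eq_bigr do rewrite ePhi.
exact: cut_bounded_weighted.
Qed.

End CutNorm.

Section Families.
Variables (R : realFieldType) (V : finType) (k : nat) (Q : 'I_k -> {set V}).

Definition fupd (g : {ffun 'I_k -> V}) (i : 'I_k) (u : V) : {ffun 'I_k -> V} :=
  [ffun t => if t == i then u else g t].

Lemma fupdK g i u : fupd (fupd g i u) i (g i) = g.
Proof. by apply/ffunP => t; rewrite !ffunE; case: eqP => // ->. Qed.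

Lemma fupd_family g i u :
  (fupd g i u \in family Q) && (g i \in Q i) = (g \in family Q) && (u \in Q i).
Proof.
apply/andP/andP => -[/familyP gQ gi]; split.
- by apply/familyP => t; have := gQ t; rewrite ffunE; case: eqP => // ->.
- by have := gQ i; rewrite ffunE eqxx.
- by apply/familyP => t; rewrite ffunE; case: eqP => // ->.
- exact: gQ.
Qed.

Lemma sum_family_fupd i (G : {ffun 'I_k -> V} -> R) :
  \sum_(g in family Q) \sum_(u in Q i) G (fupd g i u) =
  #|Q i|%:R * \sum_(g in family Q) G g.
Proof.
rewrite mulr_sumr; under [RHS]eq_bigr do rewrite mulr_natl -sumr_const.
rewrite !pair_big_dep /=.
pose swap (p : {ffun 'I_k -> V} * V) := (fupd p.1 i p.2, p.1 i).
have swapK : involutive swap by move=> [g u]; rewrite /swap /= fupdK ffunE eqxx.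
rewrite [RHS](reindex_inj (inv_inj swapK)) /=.
by apply: eq_bigl => -[g u]; rewrite fupd_family.
Qed.

Lemma sum_family_prod (f : 'I_k -> V -> R) :
  \sum_(g in family Q) \prod_i f i (g i) = \prod_i \sum_(v in Q i) f i v.
Proof. by rewrite (bigA_distr_big_dep (fun i v => v \in Q i) f). Qed.

Lemma card_family_prod : #|family Q|%:R = \prod_i (#|Q i|%:R : R).
Proof.
transitivity (\sum_(g in family Q) \prod_(i < k) (1 : R)).
  by under eq_bigr do rewrite big1_eq; rewrite sumr_const.
by rewrite (sum_family_prod (fun _ _ => 1)); apply: eq_bigr => i _; rewrite sumr_const.
Qed.

(* Averaging over the resampled coordinates [i] and [j] turns the sum into
   a cut of [h] weighted by the separable factor [K]. *)
Lemma family_edge_bound i j (h : V -> V -> R) (K : {ffun 'I_k -> V} -> R) (eps : R) :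
  i != j -> 0 <= eps ->
  (forall g, separable (fun u v => K (fupd (fupd g i u) j v))) ->
  cut_bounded h (Q i) (Q j) (eps * (#|Q i|%:R * #|Q j|%:R)) ->
  `|\sum_(g in family Q) h (g i) (g j) * K g| <= eps * #|family Q|%:R.
Proof.
move=> nij eps0 sepK hcut.
have [g0 /familyP g0Q | fam0] := pickP (mem (family Q)); last first.
  by rewrite big_pred0 // normr0 mulr_ge0.
set n : R := #|Q i|%:R * #|Q j|%:R.
have n_gt0 : 0 < n by rewrite mulr_gt0 // ltr0n; apply/card_gt0P; [exists (g0 i) | exists (g0 j)].
rewrite -(ler_pM2l n_gt0) -[n in n * `|_|]gtr0_norm // -normrM.
have resample : n * \sum_(g in family Q) h (g i) (g j) * K g =
    \sum_(g in family Q) \sum_(u in Q i) \sum_(v in Q j)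
      h u v * K (fupd (fupd g i u) j v).
  rewrite /n -mulrA -sum_family_fupd -(sum_family_fupd i (fun g => \sum_(v in Q j) _)).
  by do 3!apply: eq_bigr => ? _; rewrite !ffunE eqxx (negbTE nij) eqxx.
rewrite resample -sumr_const !mulr_sumr.
apply: le_trans (ler_norm_sum _ _ _) (ler_sum _ _) => g _.
under eq_bigr do under eq_bigr do rewrite mulrC.
by rewrite mulr1 mulrC; apply: cut_bounded_separable.
Qed.

Section Counting.
Variables (w : V -> V -> R) (fw : 'I_k -> V -> R).
Hypotheses (w01 : forall u v, 0 <= w u v <= 1) (fw01 : forall i v, 0 <= fw i v <= 1).

Lemma ordered_pair_misses_endpoint (p q : 'I_k * 'I_k) :
  (p.1 < p.2)%N -> (q.1 < q.2)%N -> q != p ->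
  ((q.1 != p.2) && (q.2 != p.2)) || ((q.1 != p.1) && (q.2 != p.1)).
Proof. by case: p q => [p1 p2] [q1 q2] /=; rewrite xpair_eqE -!val_eqE /=; lia. Qed.

Lemma separable_edges_fupd (s : seq ('I_k * 'I_k)) (p : 'I_k * 'I_k) (g : {ffun 'I_k -> V}) :
  (p.1 < p.2)%N -> p \notin s -> (forall q, q \in s -> (q.1 < q.2)%N) ->
  separable (fun u v => (\prod_(q <- s) w (fupd (fupd g p.1 u) p.2 v q.1)
                                          (fupd (fupd g p.1 u) p.2 v q.2)) *
                        \prod_i fw i (fupd (fupd g p.1 u) p.2 v i)).
Proof.
move=> p_lt p_s s_lt; have fupd2E u v t :
    fupd (fupd g p.1 u) p.2 v t = if t == p.2 then v else if t == p.1 then u else g t.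
  by rewrite !ffunE.
apply: separable_mul; apply: separable_prod.
- move=> q qs _; have q_ne_p : q != p by apply: contraNneq p_s => <-.
  have := ordered_pair_misses_endpoint p_lt (s_lt q qs) q_ne_p.
  case/orP=> /andP[/negbTE q1 /negbTE q2].
    by apply: separable_indep_r => // u v v'; rewrite !fupd2E q1 q2.
  by apply: separable_indep_l => // u u' v; rewrite !fupd2E q1 q2.
- move=> i _ _; have [-> | /negbTE ip2] := eqVneq i p.2.
    by apply: separable_indep_l => // u u' v; rewrite !fupd2E eqxx.
  by apply: separable_indep_r => // u v v'; rewrite !fupd2E ip2.
Qed.

Lemma family_counting (dd : 'I_k * 'I_k -> R) (eps : R) (s : seq ('I_k * 'I_k)) :
  0 <= eps -> uniq s ->
  (forall p, p \in s -> [/\ (p.1 < p.2)%N, 0 <= dd p <= 1 &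
     cut_bounded (fun u v => w u v - dd p) (Q p.1) (Q p.2)
                 (eps * (#|Q p.1|%:R * #|Q p.2|%:R))]) ->
  `|\sum_(g in family Q) (\prod_(p <- s) w (g p.1) (g p.2)) * \prod_i fw i (g i)
    - (\prod_(p <- s) dd p) * \sum_(g in family Q) \prod_i fw i (g i)|
  <= (size s)%:R * eps * #|family Q|%:R.
Proof.
move=> eps0; elim: s => [_ _|p s IHs /= /andP[p_s s_uniq] s_ok].
  rewrite big_nil mul1r; under eq_bigr do rewrite big_nil mul1r.
  by rewrite subrr normr0 !mul0r.
have [p_lt /andP[dd0 dd1] p_cut] := s_ok p (mem_head p s).
have s_ok' q (qs : q \in s) := s_ok q (mem_behead (qs : q \in behead (p :: s))).
set K := fun g : {ffun 'I_k -> V} => (\prod_(q <- s) w (g q.1) (g q.2)) * \prod_i fw i (g i).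
set Y := \sum_(g in family Q) \prod_i fw i (g i).
have -> : \sum_(g in family Q) (\prod_(q <- p :: s) w (g q.1) (g q.2)) * \prod_i fw i (g i)
          - (\prod_(q <- p :: s) dd q) * Y =
          \sum_(g in family Q) (w (g p.1) (g p.2) - dd p) * K g
          + dd p * (\sum_(g in family Q) K g - (\prod_(q <- s) dd q) * Y).
  rewrite big_cons mulrBr mulrA addrA; congr (_ - _).
  rewrite mulr_sumr -big_split /=; apply: eq_bigr => g _; rewrite big_cons /K; ring.
have p_edge : `|\sum_(g in family Q) (w (g p.1) (g p.2) - dd p) * K g| <= eps * #|family Q|%:R.
  apply: family_edge_bound p_cut => //; first by rewrite -val_eqE neq_ltn p_lt.
  by move=> g; apply: separable_edges_fupd => // q /s_ok'[].
have s_edges := IHs s_uniq s_ok'.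
apply: le_trans (ler_normD _ _) _; rewrite normrM ger0_norm // -addn1 natrD.
have N0 : 0 <= eps * #|family Q|%:R by rewrite mulr_ge0.
set E := `|_ - _| in s_edges *; have E0 : 0 <= E by apply: normr_ge0.
nra.
Qed.

End Counting.

End Families.

Section GraphWeights.
Variables (R : realFieldType) (V : finType) (e : rel V).

Lemma wG_01 u v : 0 <= wG R e u v <= 1.
Proof. by rewrite /wG; case: (e u v); rewrite ?lexx ?ler01. Qed.

Lemma wGC u v : simple_graph e -> wG R e u v = wG R e v u.
Proof. by case=> eC _; rewrite /wG eC. Qed.

Lemma densC (U W : {set V}) : simple_graph e -> dens R e U W = dens R e W U.
Proof.
move=> sg; rewrite /dens /wGs exchange_big [(#|U|%:R * _)]mulrC.
by congr (_ / _); do 2!apply: eq_bigr => ? _; apply: wGC.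
Qed.

Lemma dens_01 (U W : {set V}) : 0 <= dens R e U W <= 1.
Proof.
have ws0 : 0 <= wGs R e U W.
  by apply: sumr_ge0 => u _; apply: sumr_ge0 => v _; case/andP: (wG_01 u v).
rewrite /dens divr_ge0 ?mulr_ge0 //=.
have [->|n_neq0] := eqVneq (#|U|%:R * #|W|%:R : R) 0; first by rewrite invr0 mulr0 ler01.
rewrite ler_pdivrMr ?lt0r ?n_neq0 ?mulr_ge0 // mul1r.
apply: le_trans (_ : \sum_(u in U) \sum_(v in W) (1 : R) <= _).
  by apply: ler_sum => u _; apply: ler_sum => v _; case/andP: (wG_01 u v).
by rewrite !sumr_const -[_ *+ #|U|]mulr_natl.
Qed.

Lemma homogeneous_cut (eps : R) (U W : {set V}) :
  homogeneous e eps U W ->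
  cut_bounded (fun u v => wG R e u v - dens R e U W) U W (eps * (#|U|%:R * #|W|%:R)).
Proof.
move=> hom W1 W2 sW1 sW2; under eq_bigr do rewrite sumrB.
rewrite sumrB !sumr_const -mulrnA -[dens _ _ _ _ *+ _]mulr_natr natrM [#|W2|%:R * _]mulrC.
exact: hom.
Qed.

Lemma homogeneous_ge0 (eps : R) (U W : {set V}) :
  homogeneous e eps U W -> 0 <= eps * (#|U|%:R * #|W|%:R).
Proof.
move=> /(_ set0 set0 (sub0set _) (sub0set _)).
by rewrite /wGs !big_set0 cards0 !mul0r mulr0 subrr normr0.
Qed.

End GraphWeights.

Section EdgeSplit.
Variables (k : nat) (F : rel 'I_k) (a b : 'I_k).
Hypotheses (a_neq_b : a != b) (FC : forall i j, F i j = F j i).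

Definition inner_edges : {set 'I_k * 'I_k} :=
  [set p | [&& p.1 != a, p.1 != b, p.2 != a, p.2 != b, (p.1 < p.2)%N & F p.1 p.2]].

Lemma big_edges_split (T : Type) (idx : T) (op : Monoid.com_law idx)
    (phi : 'I_k -> 'I_k -> T) :
  (forall i j, phi i j = phi j i) ->
  \big[op/idx]_(i < k) \big[op/idx]_(j < k | (i < j)%N && F i j) phi i j =
  op (if F a b then phi a b else idx)
     (op (\big[op/idx]_(p in inner_edges) phi p.1 p.2)
         (\big[op/idx]_(j | (j != a) && (j != b))
             op (if F a j then phi a j else idx) (if F b j then phi b j else idx))).
Proof.
move=> phiC; pose psi := fun i j : 'I_k => if (i < j)%N && F i j then phi i j else idx.
have psi_pair c j : j != c -> op (psi c j) (psi j c) = if F c j then phi c j else idx.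
  rewrite /psi FC phiC; case: ltngtP => //= [_ _|_ _|/val_inj -> /eqP //].
    by rewrite Monoid.mulm1; case: ifP.
  by rewrite Monoid.mul1m; case: ifP.
have psi_diag c : psi c c = idx by rewrite /psi ltnn.
have b_neq_a : b != a by rewrite eq_sym.
have row c : \big[op/idx]_j psi c j =
    op (psi c a) (op (psi c b) (\big[op/idx]_(j | (j != a) && (j != b)) psi c j)).
  by rewrite (bigD1 a) // (bigD1 b).
under [LHS]eq_bigr do rewrite big_mkcond -/(psi _ _) /=.
rewrite (eq_bigr _ (fun i _ => row i)) (bigD1 a) // (bigD1 b) //= !big_split /=.
have inner : \big[op/idx]_(p in inner_edges) phi p.1 p.2 =
    \big[op/idx]_(i | (i != a) && (i != b)) \big[op/idx]_(j | (j != a) && (j != b)) psi i j.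
  rewrite pair_big_dep big_mkcond [RHS]big_mkcond; apply: eq_bigr => -[i j] _.
  rewrite inE /psi /=.
  by case: (i != a); case: (i != b); case: (j != a); case: (j != b).
under [X in _ = op _ (op _ (op X _))]eq_bigr => i /andP[ia _] do rewrite -(psi_pair a i ia).
under [X in _ = op _ (op _ (op _ X))]eq_bigr => i /andP[_ ib] do rewrite -(psi_pair b i ib).
rewrite -(psi_pair a b) // inner !big_split /= !psi_diag !Monoid.mul1m.
by rewrite [LHS](AC (2*(2*(1*(1*1)))) ((1*3)*(7*((2*5)*(4*6))))).
Qed.

Lemma nedges_split : F a b ->
  nedges F = (1 + (#|inner_edges| + \sum_(j | (j != a) && (j != b)) (F a j + F b j)))%N.
Proof.
move=> Fab; rewrite /nedges -sum1_card.
rewrite (eq_bigl (fun p : 'I_k * 'I_k => (p.1 < p.2)%N && F p.1 p.2)) => [|p]; last first.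
  by rewrite inE.
rewrite -(pair_big_dep xpredT (fun i j : 'I_k => (i < j)%N && F i j) (fun _ _ => 1%N)) /=.
by rewrite big_edges_split // Fab sum1_card.
Qed.

End EdgeSplit.

Section Averages.
Variables (R : realFieldType) (V : finType).

Lemma norm_prodB_le (I : Type) (r : seq I) (P : pred I) (x z : I -> R) :
  (forall i, P i -> 0 <= x i <= 1) -> (forall i, P i -> 0 <= z i <= 1) ->
  `|\prod_(i <- r | P i) x i - \prod_(i <- r | P i) z i| <= \sum_(i <- r | P i) `|x i - z i|.
Proof.
move=> x01 z01; elim: r => [|i r IHr]; first by rewrite !big_nil subrr normr0.
rewrite !big_cons; case: ifP => // Pi.
have [/andP[xi0 xi1] /andP[zi0 zi1]] := (x01 i Pi, z01 i Pi).
set X := \prod_(j <- r | P j) x j; set Z := \prod_(j <- r | P j) z j.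
have X0 : 0 <= X by apply: prodr_ge0 => j /x01/andP[].
have X1 : X <= 1 by apply: prodr_ile1.
have -> : x i * X - z i * Z = (x i - z i) * X + z i * (X - Z) by ring.
apply: le_trans (ler_normD _ _) (lerD _ _); rewrite normrM.
  by rewrite (ger0_norm X0) ler_piMr.
by rewrite (ger0_norm zi0); apply: le_trans (ler_piMl _ zi1) IHr.
Qed.

Lemma avg_01 (C : {set V}) (f : V -> R) :
  (forall v, 0 <= f v <= 1) -> 0 <= (\sum_(v in C) f v) / #|C|%:R <= 1.
Proof.
move=> f01; have [C0|C_gt0] := posnP #|C|.
  by rewrite C0 invr0 mulr0 lexx ler01.
rewrite divr_ge0 ?sumr_ge0 // => [|v _]; last by case/andP: (f01 v).
rewrite ler_pdivrMr ?ltr0n // mul1r -[_%:R]mulr1 mulr_natl -sumr_const.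
by apply: ler_sum => v _; case/andP: (f01 v).
Qed.

Lemma sum_avg_mul_deviation (A B C : {set V}) (al be : V -> V -> R) (ca cb Ma Mb : R) :
  (0 < #|C|)%N -> (forall x v, 0 <= al x v <= 1) -> 0 <= cb <= 1 ->
  (forall ga : V -> R, (forall v, 0 <= ga v <= 1) ->
     \sum_(x in A) `|\sum_(v in C) ga v * (al x v - ca)| <= Ma) ->
  (forall ga : V -> R, (forall v, 0 <= ga v <= 1) ->
     \sum_(y in B) `|\sum_(v in C) ga v * (be y v - cb)| <= Mb) ->
  \sum_(x in A) \sum_(y in B) `|(\sum_(v in C) al x v * be y v) / #|C|%:R - ca * cb|
  <= (#|B|%:R * Ma + #|A|%:R * Mb) / #|C|%:R.
Proof.
move=> C_gt0 al01 /andP[cb0 cb1] hMa hMb; have c_gt0 : 0 < (#|C|%:R : R) by rewrite ltr0n.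
set X := fun x y => \sum_(v in C) al x v * (be y v - cb).
set Y := fun x => \sum_(v in C) 1 * (al x v - ca).
have split x y : (\sum_(v in C) al x v * be y v) / #|C|%:R - ca * cb =
                 (X x y + cb * Y x) / #|C|%:R.
  have -> : X x y = \sum_(v in C) al x v * be y v - (\sum_(v in C) al x v) * cb.
    by rewrite /X; under eq_bigr do rewrite mulrBr; rewrite sumrB mulr_suml.
  have -> : Y x = \sum_(v in C) al x v - ca * #|C|%:R.
    by rewrite /Y; under eq_bigr do rewrite mul1r; rewrite sumrB sumr_const mulr_natr.
  by field; rewrite lt0r_neq0.
under eq_bigr do under eq_bigr do rewrite split.
apply: le_trans (_ : \sum_(x in A) \sum_(y in B) (`|X x y| + `|Y x|) / #|C|%:R <= _).
  apply: ler_sum => x _; apply: ler_sum => y _.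
  rewrite normrM normfV (gtr0_norm c_gt0) ler_pM2r ?invr_gt0 //.
  by apply: le_trans (ler_normD _ _) _; rewrite lerD2l normrM ger0_norm // ler_piMl.
under eq_bigr do rewrite -mulr_suml; rewrite -mulr_suml ler_pM2r ?invr_gt0 //.
under eq_bigr do rewrite big_split /= sumr_const -mulr_natl; rewrite big_split /= -mulr_sumr.
have sumX : \sum_(x in A) \sum_(y in B) `|X x y| <= #|A|%:R * Mb.
  by rewrite mulr_natl -sumr_const; apply: ler_sum => x _; apply: hMb.
have sumY : \sum_(x in A) `|Y x| <= Ma by apply: hMa => v; rewrite ler01 lexx.
by rewrite addrC lerD // ler_wpM2l.
Qed.

Lemma card_mul_lt_sum (T : finType) (A B : {set T}) (f : T -> R) (t : R) :
  A \subset B -> (forall p, p \in B -> 0 <= f p) -> (forall p, p \in A -> t < f p) ->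
  A != set0 -> #|A|%:R * t < \sum_(p in B) f p.
Proof.
move=> AB f0 tf /set0Pn[p0 p0A].
rewrite mulr_natl -sumr_const [X in _ < X](big_setID A) /= (setIidPr AB).
apply: (@lt_le_trans _ _ (\sum_(p in A) f p)).
  by apply: ltr_sum => [|p /tf //]; apply/hasP; exists p0; rewrite ?mem_index_enum.
by rewrite lerDl sumr_ge0 // => p; rewrite inE => /andP[_ /f0].
Qed.

End Averages.

Section Pinned.
Variables (R : realFieldType) (V : finType) (e : rel V) (eps : R) (k : nat)
  (part : V -> 'I_k) (F : rel 'I_k) (a b : 'I_k).
Hypotheses (sg : simple_graph e) (eps0 : 0 <= eps)
  (hom : forall i j : 'I_k, i != j -> homogeneous e eps (cls part i) (cls part j))
  (FC : forall i j, F i j = F j i) (F_irr : forall i, ~~ F i i) (Fab : F a b).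

Local Notation Vc := (cls part).
Local Notation d i j := (dens R e (Vc i) (Vc j)).
Local Notation J j := ((j != a) && (j != b)).
Local Notation P := (\prod_(i < k | (i != a) && (i != b)) (#|Vc i|%:R : R)).

Let a_neq_b : a != b. Proof. by apply: contraTneq Fab => ->; rewrite (negbTE (F_irr b)). Qed.

Definition pinned (x y : V) (i : 'I_k) : {set V} :=
  if i == a then [set x] else if i == b then [set y] else Vc i.

(* Set to [1] at [a] and [b], so that it can be multiplied over all of ['I_k]. *)
Definition link_weight (x y : V) (j : 'I_k) (v : V) : R :=
  if J j then (if F a j then wG R e x v else 1) * (if F b j then wG R e y v else 1)
  else 1.

Definition link_density (j : 'I_k) : R :=
  (if F a j then d a j else 1) * (if F b j then d b j else 1).

Definition link_error (x y : V) : R :=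
  \sum_(j | J j) `|(\sum_(v in Vc j) link_weight x y j v) / #|Vc j|%:R - link_density j|.

Lemma link_weight_01 x y j v : 0 <= link_weight x y j v <= 1.
Proof. by rewrite /link_weight; case: ifP; rewrite ?lexx ?ler01 ?mulr_01 ?if_01 ?wG_01. Qed.

Lemma link_density_01 j : 0 <= link_density j <= 1.
Proof. by rewrite mulr_01 ?if_01 ?dens_01. Qed.

Lemma pinned_J x y j : J j -> pinned x y j = Vc j.
Proof. by case/andP=> /negbTE ja /negbTE jb; rewrite /pinned ja jb. Qed.

Lemma family_pinned_ab x y (g : {ffun 'I_k -> V}) :
  g \in family (pinned x y) -> g a = x /\ g b = y.
Proof.
move=> /familyP gQ; split; apply/set1P; first by have := gQ a; rewrite /pinned eqxx.
by have := gQ b; rewrite /pinned eq_sym (negbTE a_neq_b) eqxx.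
Qed.

Lemma pinned_family x y (g : {ffun 'I_k -> V}) : x \in Vc a -> y \in Vc b ->
  (Pmap part g && (g a == x) && (g b == y)) = (g \in family (pinned x y)).
Proof.
move=> xa yb; apply/idP/idP => [/andP[/andP[/forallP gP /eqP ga] /eqP gb] | gQ].
  apply/familyP => t; rewrite /pinned; case: eqVneq => [->|_]; first by rewrite ga set11.
  by case: eqVneq => [->|_]; [rewrite gb set11 | rewrite inE gP].
have [ga gb] := family_pinned_ab gQ; rewrite ga gb !eqxx !andbT; apply/forallP => t.
have [->|ta] := eqVneq t a; first by move: xa; rewrite ga inE.
have [->|tb] := eqVneq t b; first by move: yb; rewrite gb inE.
by move/familyP/(_ t): gQ; rewrite pinned_J ?ta ?tb // inE.
Qed.

Lemma pinned_prod x y (f : 'I_k -> {set V} -> R) :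
  \prod_i f i (pinned x y i) = f a [set x] * f b [set y] * \prod_(j | J j) f j (Vc j).
Proof.
rewrite (bigD1 a) // (bigD1 b) 1?eq_sym //= mulrA /pinned eqxx eq_sym (negbTE a_neq_b) eqxx.
by congr (_ * _); apply: eq_bigr => j /andP[/negbTE -> /negbTE ->].
Qed.

Lemma card_pinned_family x y : #|family (pinned x y)|%:R = P.
Proof. by rewrite card_family_prod (pinned_prod x y (fun _ A => #|A|%:R)) !cards1 !mul1r. Qed.

Lemma class_gt0 j : P != 0 -> J j -> (0 < #|Vc j|)%N.
Proof.
move=> P_neq0 Jj; rewrite lt0n; apply: contraNneq P_neq0 => Vj0.
by rewrite (bigD1 j) //= Vj0 mul0r.
Qed.

Lemma sum_pinned_link x y : P != 0 ->
  \sum_(g in family (pinned x y)) \prod_i link_weight x y i (g i) =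
  P * \prod_(j | J j) ((\sum_(v in Vc j) link_weight x y j v) / #|Vc j|%:R).
Proof.
move=> P_neq0; rewrite sum_family_prod.
rewrite (pinned_prod x y (fun i A => \sum_(v in A) link_weight x y i v)).
rewrite !big_set1 /link_weight !eqxx andbF !mul1r -big_split /=.
by apply: eq_bigr => j Jj; rewrite mulrC divfK // pnatr_eq0 -lt0n class_gt0.
Qed.

Lemma homg_pinned x y (g : {ffun 'I_k -> V}) : g \in family (pinned x y) ->
  homg R e F g = wG R e x y * ((\prod_(p <- enum (inner_edges F a b)) wG R e (g p.1) (g p.2))
                               * \prod_i link_weight x y i (g i)).
Proof.
move=> /family_pinned_ab[ga gb].
rewrite /homg (big_edges_split a_neq_b FC) => [|i j]; last exact: wGC.
rewrite Fab big_enum ga gb; congr (_ * (_ * _)).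
by rewrite big_mkcond; apply: eq_bigr => i _; rewrite /link_weight; case: ifP.
Qed.

Lemma dens_prod_pinned :
  \prod_(i < k) \prod_(j < k | (i < j)%N && F i j &&
       ~~ (((i == a) && (j == b)) || ((i == b) && (j == a)))) d i j =
  (\prod_(p <- enum (inner_edges F a b)) d p.1 p.2) * \prod_(j | J j) link_density j.
Proof.
pose phi (i j : 'I_k) := if ((i == a) && (j == b)) || ((i == b) && (j == a)) then 1 else d i j.
rewrite [LHS](eq_bigr (fun i : 'I_k => \prod_(j < k | (i < j)%N && F i j) phi i j)) => [|i _].
  rewrite (big_edges_split a_neq_b FC) => [|i j]; last first.
    by rewrite /phi orbC ![(j == _) && _]andbC densC.
  rewrite Fab /= {1}/phi !eqxx mul1r big_enum; congr (_ * _).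
    apply: eq_bigr => p; rewrite inE => /and5P[/negbTE p1a /negbTE p1b _ _ _].
    by rewrite /phi p1a p1b.
  apply: eq_bigr => j /andP[/negbTE ja /negbTE jb].
  by rewrite /phi /link_density !eqxx ja jb !andbF.
by rewrite big_mkcondr; apply: eq_bigr => j _; rewrite if_neg.
Qed.

Lemma pinned_counting x y : P != 0 ->
  `|\sum_(g in family (pinned x y))
       (\prod_(p <- enum (inner_edges F a b)) wG R e (g p.1) (g p.2))
       * \prod_i link_weight x y i (g i)
    - (\prod_(p <- enum (inner_edges F a b)) d p.1 p.2)
       * (P * \prod_(j | J j) ((\sum_(v in Vc j) link_weight x y j v) / #|Vc j|%:R))|
  <= #|inner_edges F a b|%:R * eps * P.
Proof.
move=> P_neq0; rewrite -(sum_pinned_link x y P_neq0) -(card_pinned_family x y) cardE.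
apply: family_counting => [u v|i v|||p]; rewrite ?wG_01 ?link_weight_01 ?enum_uniq //.
rewrite mem_enum inE => /and5P[p1a p1b p2a p2b /andP[p_lt _]].
rewrite dens_01 !pinned_J ?p1a ?p1b ?p2a ?p2b //; split=> //.
by apply/homogeneous_cut/hom; rewrite -val_eqE neq_ltn p_lt.
Qed.

Lemma pinned_error_le x y : x \in Vc a -> y \in Vc b ->
  `| \sum_(g : {ffun 'I_k -> V} | Pmap part g && (g a == x) && (g b == y)) homg R e F g
     - P * (wG R e x y * \prod_(i < k) \prod_(j < k | (i < j)%N && F i j &&
              ~~ (((i == a) && (j == b)) || ((i == b) && (j == a)))) d i j) |
  <= P * (#|inner_edges F a b|%:R * eps + link_error x y).
Proof.
move=> xa yb; rewrite (eq_bigl _ _ (fun g => pinned_family g xa yb)).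
rewrite (eq_bigr _ (fun g gQ => homg_pinned gQ)) -mulr_sumr dens_prod_pinned.
have [P0|P_neq0] := eqVneq P 0.
  have /card0_eq fam0 : #|family (pinned x y)| = 0%N.
    by apply/eqP; rewrite -(pnatr_eq0 R) card_pinned_family P0.
  by rewrite (big_pred0 _ _ _ _ fam0) P0 mulr0 !mul0r subr0 normr0.
have := pinned_counting x y P_neq0.
set Sw := \sum_(g in _) _; set Ds := \prod_(p <- _) _; set Avg := \prod_(j | _) (_ / _).
set Dl := \prod_(j | J j) _ => counting.
have links : `|Avg - Dl| <= link_error x y.
  apply: norm_prodB_le => j _; rewrite ?avg_01 ?link_density_01 // => v.
  exact: link_weight_01.
have [w0 w1] := andP (wG_01 R e x y).
have Ds0 : 0 <= Ds by apply: prodr_ge0 => p _; case/andP: (dens_01 R e (Vc p.1) (Vc p.2)).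
have Ds1 : Ds <= 1 by apply: prodr_ile1 => p _; exact: dens_01.
have P0 : 0 <= P by apply: prodr_ge0.
have -> : wG R e x y * Sw - P * (wG R e x y * (Ds * Dl)) =
          wG R e x y * (Sw - Ds * (P * Avg)) + wG R e x y * Ds * P * (Avg - Dl) by ring.
rewrite [X in _ <= X]mulrDr; apply: le_trans (ler_normD _ _) (lerD _ _); rewrite normrM.
  rewrite (ger0_norm w0) [X in _ <= X]mulrC.
  exact: le_trans (ler_piMl (normr_ge0 _) w1) counting.
rewrite (ger0_norm (mulr_ge0 (mulr_ge0 w0 Ds0) P0)) -mulrA.
apply: le_trans (ler_piMl (mulr_ge0 P0 (normr_ge0 _)) (mulr_ile1 w0 Ds0 w1 Ds1)) _.
exact: ler_wpM2l.
Qed.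

Lemma sum_link_error_at j : P != 0 -> J j ->
  \sum_(x in Vc a) \sum_(y in Vc b)
    `|(\sum_(v in Vc j) link_weight x y j v) / #|Vc j|%:R - link_density j|
  <= 2 * eps * ((F a j)%:R + (F b j)%:R) * (#|Vc a|%:R * #|Vc b|%:R).
Proof.
move=> P_neq0 Jj; have [aj bj] : a != j /\ b != j by case/andP: Jj; rewrite !(eq_sym j).
have l1 (i : 'I_k) (f : bool) : i != j -> forall ga : V -> R, (forall v, 0 <= ga v <= 1) ->
    \sum_(x in Vc i)
      `|\sum_(v in Vc j) ga v * ((if f then wG R e x v else 1) - (if f then d i j else 1))|
    <= f%:R * (2 * (eps * (#|Vc i|%:R * #|Vc j|%:R))).
  case: f => ij ga ga01; last first.
    by rewrite mul0r big1 // => x _; rewrite big1 ?normr0 // => v _; rewrite subrr mulr0.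
  by rewrite mul1r; apply: cut_bounded_l1 => //; apply/homogeneous_cut/hom.
under eq_bigr do under eq_bigr do rewrite /link_weight Jj.
apply: le_trans (sum_avg_mul_deviation (class_gt0 P_neq0 Jj) _ _
                   (l1 a (F a j) aj) (l1 b (F b j) bj)) _.
- by move=> x v; rewrite if_01 ?wG_01.
- by rewrite if_01 ?dens_01.
rewrite le_eqVlt; apply/orP; left; apply/eqP.
by field; rewrite pnatr_eq0 -lt0n class_gt0.
Qed.

Lemma sum_link_error : P != 0 ->
  \sum_(x in Vc a) \sum_(y in Vc b) link_error x y
  <= 2 * eps * (\sum_(j | J j) ((F a j)%:R + (F b j)%:R)) * (#|Vc a|%:R * #|Vc b|%:R).
Proof.
move=> P_neq0; rewrite /link_error; under eq_bigr do rewrite exchange_big /=.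
rewrite exchange_big /= mulr_sumr mulr_suml; apply: ler_sum => j Jj.
exact: sum_link_error_at.
Qed.

Definition deviant_pairs (t : R) : {set V * V} :=
  [set x : V * V | (x.1 \in Vc a) && (x.2 \in Vc b) &&
    ~~ (`| \sum_(g : {ffun 'I_k -> V} | Pmap part g && (g a == x.1) && (g b == x.2))
             homg R e F g
           - P * (wG R e x.1 x.2 * \prod_(i < k) \prod_(j < k | (i < j)%N && F i j &&
                ~~ (((i == a) && (j == b)) || ((i == b) && (j == a)))) d i j) |
        <= P * (t * (nedges F)%:R))].

Lemma deviant_pairs_sub t : deviant_pairs t \subset setX (Vc a) (Vc b).
Proof. by apply/subsetP => p; rewrite !inE => /andP[/andP[-> ->]]. Qed.

Lemma deviant_link_error (t : R) p : eps <= t -> p \in deviant_pairs t ->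
  P != 0 /\ t * (1 + \sum_(j | J j) ((F a j)%:R + (F b j)%:R)) < link_error p.1 p.2.
Proof.
move=> eps_le_t; rewrite inE => /andP[/andP[pa pb]].
rewrite -ltNge => /lt_le_trans/(_ (pinned_error_le pa pb)).
have [->|P_neq0] := eqVneq P 0; first by rewrite !mul0r ltxx.
have P_gt0 : 0 < P by rewrite lt0r P_neq0 prodr_ge0.
rewrite ltr_pM2l // (nedges_split a_neq_b FC Fab) !natrD natr_sum.
under eq_bigr do rewrite natrD.
have : #|inner_edges F a b|%:R * eps <= #|inner_edges F a b|%:R * t by rewrite ler_wpM2l.
by split=> //; lra.
Qed.

(* Markov's inequality for [link_error] over [V_a * V_b]. *)
Lemma card_deviant_pairs (t : R) : eps <= t -> deviant_pairs t != set0 ->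
  #|deviant_pairs t|%:R * t < 2 * eps * (#|Vc a|%:R * #|Vc b|%:R).
Proof.
move=> eps_le_t dev_neq0; have [p0 /(deviant_link_error eps_le_t)[P_neq0 _]] := set0Pn _ dev_neq0.
pose N : R := \sum_(j | J j) ((F a j)%:R + (F b j)%:R).
have N0 : 0 <= N by rewrite sumr_ge0 // => j _; rewrite addr_ge0.
have := card_mul_lt_sum (deviant_pairs_sub t) (f := fun p => link_error p.1 p.2)
  (fun p _ => sumr_ge0 _ (fun j _ => normr_ge0 _))
  (fun p dev_p => (deviant_link_error eps_le_t dev_p).2) dev_neq0.
have -> : \sum_(p in setX (Vc a) (Vc b)) link_error p.1 p.2 =
          \sum_(x in Vc a) \sum_(y in Vc b) link_error x y.
  by rewrite [RHS]pair_big_dep; apply: eq_bigl => -[x y]; rewrite inE.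
move=> /lt_le_trans/(_ (sum_link_error P_neq0)); rewrite -/N mulrA.
have : 0 <= 2 * eps * (#|Vc a|%:R * #|Vc b|%:R) by rewrite !mulr_ge0.
nra.
Qed.

End Pinned.

Theorem lemma40 (R : rcfType) (V : finType) (e : rel V) (eps : R) (k : nat)
    (part : V -> 'I_k) (F : rel 'I_k) (a b : 'I_k) :
  simple_graph e ->
  eps_regular_partition e eps part ->
  (forall i j, F i j = F j i) -> (forall i, ~~ F i i) ->
  F a b ->
  let Vc := cls part in
  let d i j := dens R e (Vc i) (Vc j) in
  let P := \prod_(i < k | (i != a) && (i != b)) (#|Vc i|%:R : R) in
  #|[set x : V * V | (x.1 \in Vc a) && (x.2 \in Vc b) &&
      ~~ (`| \sum_(g : {ffun 'I_k -> V} | Pmap part g && (g a == x.1) && (g b == x.2))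
               homg R e F g
             - P * (wG R e x.1 x.2 *
                    \prod_(i < k) \prod_(j < k | (i < j)%N && F i j &&
                         ~~ (((i == a) && (j == b)) || ((i == b) && (j == a)))) d i j) |
          <= P * (Num.sqrt eps * (nedges F)%:R))]|%:R
  <= 2 * k%:R * Num.sqrt eps * (#|Vc a|%:R * #|Vc b|%:R).
Proof.
move=> sg [_ hom] FC F_irr Fab; cbv beta zeta.
rewrite -/(deviant_pairs e part F a b (Num.sqrt eps)).
set W := (#|cls part a|%:R * #|cls part b|%:R : R); set se := Num.sqrt eps.
have a_neq_b : a != b by apply: contraTneq Fab => ->; rewrite (negbTE (F_irr b)).
have dev_le_W : #|deviant_pairs e part F a b se|%:R <= W.
  by rewrite /W -natrM -cardsX ler_nat subset_leq_card ?deviant_pairs_sub.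
have k_ge1 : 1 <= (k%:R : R) by rewrite ler1n (leq_ltn_trans _ (ltn_ord a)).
have [W0 se0] : 0 <= W /\ 0 <= se by rewrite mulr_ge0 ?sqrtr_ge0.
(* Outside [0, 1] the claim is trivial: [eps < 0] forces [W = 0], and [eps > 1]
   gives [sqrt eps >= 1]. *)
have [/andP[eps0 eps1]|eps_out] := boolP (0 <= eps <= 1); last first.
  apply: le_trans dev_le_W _; move: eps_out; rewrite negb_and -!ltNge => /orP[eps_lt0|eps_gt1].
    have := homogeneous_ge0 (hom a b a_neq_b); rewrite -/W nmulr_rge0 // => W_le0.
    by rewrite (@le_anti _ _ W 0) ?W_le0 ?W0 ?mulr0.
  have se_ge1 : 1 <= se by rewrite -sqrtr1 ler_sqrt ?ltW // (lt_trans ltr01).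
  by rewrite -[X in X <= _]mul1r ler_wpM2r //; have := mulr_ege1 k_ge1 se_ge1; lra.
have [-> | dev_neq0] := eqVneq (deviant_pairs e part F a b se) set0.
  by rewrite cards0 !mulr_ge0.
have eps_le_se : eps <= se.
  by rewrite -{1}(sqr_sqrtr eps0) expr2 ler_piMl ?sqrtr_ge0 // -sqrtr1 ler_sqrt.
have := card_deviant_pairs sg eps0 hom FC F_irr Fab eps_le_se dev_neq0.
rewrite -(sqr_sqrtr eps0) -/se -/W => card_lt.
have se_gt0 : 0 < se.
  by rewrite lt0r se0 andbT; apply: contraTneq card_lt => ->; rewrite expr2 !(mulr0, mul0r) ltxx.
have : #|deviant_pairs e part F a b se|%:R < 2 * se * W by rewrite -(ltr_pM2r se_gt0); lra.
have := mulr_ge0 se0 W0; nra.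
Qed.
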